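(* Let $E$ be an $S$-scaled vector space and $u:E\to E$ a $1$-bounded $\tau$-morphism. For every $s\in]0,\tau[$ satisfying $\frac{3N_\tau^1(u)}{\tau-s}\le\frac12$ and every $x\in E_\tau$, one has: 1) $|(e^{-u}(\mathrm{Id}+u)-\mathrm{Id})x|_s\le\frac{36|x|_\tau}{(\tau-s)^2}N_\tau^1(u)^2$; 2) $|(e^{-u}(\mathrm{Id}+u)-\mathrm{Id})x|_s\le\frac{2|u(x)|_\tau}{\tau-s}N_\tau^1(u)$; 3) $|(e^{-u}-\mathrm{Id})x|_s\le\frac{6|x|_\tau}{\tau-s}N_\tau^1(u)$; 4) $|(e^{-u}-\mathrm{Id})x|_s\le 2|u(x)|_\tau$; 5) $|e^ux|_s\le 2|x|_\tau$.
   Context: An $S$-scaled vector space is $E=\bigcup_{s\in]0,S[}E_s$ where $(E_s)$ is a decreasing family of Banach spaces (norms $|\cdot|_s$) with inclusions $E_{s+\sigma}\subset E_s$ of norm $\le1$, with the direct-limit topology. A linear map $u:E\to E$ is a $\tau$-morphism if $u(E_{s'})\subset E_s$ continuously for all $s'\in]0,\tau]$, $s\in]0,s'[$; it is $1$-bounded if $|u(x)|_s\le C\sigma^{-1}|x|_{s+\sigma}$ for all $s\in]0,\tau[$, $\sigma\in]0,\tau-s]$, $x\in E_{s+\sigma}$, and $N_\tau^1(u)$ is the smallest such $C$. $e^{\pm u}:=\sum_{j\ge0}(\pm u)^j/j!$. In 2) and 4), $|y|_\tau$ is understood as $+\infty$ if $y\notin E_\tau$. *)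

From HB Require Import structures.
From mathcomp Require Import all_boot all_order all_algebra.
From mathcomp Require Import boolp classical_sets reals.
Set Implicit Arguments. Unset Strict Implicit. Unset Printing Implicit Defensive.
Import Order.TTheory GRing.Theory Num.Theory.
Local Open Scope ring_scope.
Local Open Scope classical_set_scope.

(* An S-scaled vector space is modelled by a carrier vector space V over R,
   a family of predicates E s (s in ]0,S[) carving out the Banach spaces E_s,
   and their norms nrm s. *)
Definition is_scaled_space (R : realType) (V : lmodType R) (S : R)
    (E : R -> V -> Prop) (nrm : R -> V -> R) : Prop :=
  0 < S /\
  [/\
      (forall x : V, exists s, 0 < s < S /\ E s x),
      (forall s, 0 < s < S ->
         [/\ E s 0, (forall x y, E s x -> E s y -> E s (x + y))
           & (forall (a : R) x, E s x -> E s (a *: x))]),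
      (forall s, 0 < s < S ->
         [/\ (forall x, E s x -> 0 <= nrm s x),
             (forall x, E s x -> nrm s x = 0 -> x = 0),
             (forall (a : R) x, E s x -> nrm s (a *: x) = `|a| * nrm s x)
           & (forall x y, E s x -> E s y -> nrm s (x + y) <= nrm s x + nrm s y)]),
      (forall s, 0 < s < S -> forall f : nat -> V,
         (forall n, E s (f n)) ->
         (forall eps, 0 < eps -> exists N, forall m n, (N <= m)%N -> (N <= n)%N ->
             nrm s (f m - f n) <= eps) ->
         exists y, E s y /\ forall eps, 0 < eps -> exists N, forall n, (N <= n)%N ->
             nrm s (f n - y) <= eps)
    &
      (forall s s', 0 < s -> s < s' -> s' < S -> forall x, E s' x ->
         E s x /\ nrm s x <= nrm s' x)].

Definition is_linear_map (R : realType) (V : lmodType R) (u : V -> V) : Prop :=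
  forall (a : R) x y, u (a *: x + y) = a *: u x + u y.

Definition is_tau_morphism (R : realType) (V : lmodType R)
    (E : R -> V -> Prop) (nrm : R -> V -> R) (tau : R) (u : V -> V) : Prop :=
  is_linear_map u /\
  forall s' s, 0 < s' -> s' <= tau -> 0 < s -> s < s' ->
    (forall x, E s' x -> E s (u x)) /\
    exists C : R, forall x, E s' x -> nrm s (u x) <= C * nrm s' x.

Definition one_bound_consts (R : realType) (V : lmodType R)
    (E : R -> V -> Prop) (nrm : R -> V -> R) (tau : R) (u : V -> V) : set R :=
  [set C | 0 <= C /\
    forall s sigma x, 0 < s -> s < tau -> 0 < sigma -> sigma <= tau - s ->
      E (s + sigma) x -> nrm s (u x) <= C * sigma^-1 * nrm (s + sigma) x].

Definition one_bounded (R : realType) (V : lmodType R)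
    (E : R -> V -> Prop) (nrm : R -> V -> R) (tau : R) (u : V -> V) : Prop :=
  one_bound_consts E nrm tau u !=set0.

Definition N1 (R : realType) (V : lmodType R)
    (E : R -> V -> Prop) (nrm : R -> V -> R) (tau : R) (u : V -> V) : R :=
  inf (one_bound_consts E nrm tau u).

(* partial sums  sum_{j<n} c^j/j! u^j x  of the series of e^{c u} x *)
Definition exp_partial (R : realType) (V : lmodType R) (u : V -> V) (c : R)
    (x : V) (n : nat) : V :=
  \sum_(j < n) ((c ^+ j) / (j`!)%:R) *: iter j u x.

Definition converges_in (R : realType) (V : lmodType R)
    (E : R -> V -> Prop) (nrm : R -> V -> R) (s : R) (f : nat -> V) (y : V) : Prop :=
  E s y /\ (forall n, E s (f n)) /\
  forall eps, 0 < eps -> exists N, forall n, (N <= n)%N -> nrm s (f n - y) <= eps.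

From HB Require Import structures.
From mathcomp Require Import all_boot all_order all_algebra.
From mathcomp Require Import boolp classical_sets reals.
From mathcomp Require Import ring lra zify.
Import Order.TTheory GRing.Theory Num.Theory.
Set Implicit Arguments. Unset Strict Implicit. Unset Printing Implicit Defensive.

(* Splitting [s, tau] into k steps of length (tau - s)/k and using the 1-bound of u
   on each step gives the Cauchy estimate |u^k x|_s <= (k N/(tau - s))^k |x|_tau,
   where N = N^1_tau(u).  Since k^k <= 3^(k-1) k!, the k-th term of every series
   below is dominated by a geometric sequence of ratio 3N/(tau - s) <= 1/2, so the
   series converge in the Banach space E_s and the five bounds are sums of
   geometric tails.  For e^{-u}(Id + u) the coefficients of Id + u combine into
   (-1)^k (1 - k)/k!, which vanish for k = 1, and the extra term of the partial
   sums tends to 0. *)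

Section FactorialBounds.
Local Open Scope nat_scope.

Lemma ffact_leq_expn n m : n ^_ m <= n ^ m.
Proof.
elim: m n => [|m IH] [|n] //.
rewrite ffactSS expnS leq_mul2l; apply/orP; right.
apply: leq_trans (IH n) _.
by case: m {IH} => // m; rewrite leq_exp2r.
Qed.

Lemma expn2_leq_fact i : 2 ^ i <= i.+1`!.
Proof. by elim: i => // i IH; rewrite expnS factS leq_mul. Qed.

Lemma bin_mul_expn2_leq k i : 'C(k, i.+1) * 2 ^ i <= k ^ i.+1.
Proof.
apply: leq_trans (ffact_leq_expn k i.+1).
by rewrite -bin_ffact leq_mul2l expn2_leq_fact orbT.
Qed.

Lemma sum_expn2_sub k : \sum_(i < k) 2 ^ (k - i) = 2 ^ k.+1 - 2.
Proof.
elim: k => [|k IH]; first by rewrite big_ord0.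
rewrite big_ord_recl subn0.
under eq_bigr => i _ do rewrite subSS.
by rewrite IH !expnS; have := expn_gt0 2 k; lia.
Qed.

(* [(1 + 1/k)^k <= 3], cleared of denominators: expanding by the binomial
   formula, the [i]-th term is at most [k^k / 2^(i-1)] for [i >= 1]. *)
Lemma expSn_leq k : k.+1 ^ k <= 3 * k ^ k.
Proof.
suff : 2 ^ k * k.+1 ^ k <= 2 ^ k * (3 * k ^ k) by rewrite leq_pmul2l ?expn_gt0.
rewrite -[k.+1]addn1 expnDn big_distrr /= big_ord_recl bin0 subn0 exp1n !muln1.
have term_le (i : 'I_k) :
    2 ^ k * ('C(k, bump 0 i) * (k ^ (k - bump 0 i) * 1 ^ bump 0 i))
      <= k ^ k * 2 ^ (k - i).
  have ik : i < k := ltn_ord i.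
  rewrite exp1n muln1 /bump add1n.
  have -> : 2 ^ k = 2 ^ i * 2 ^ (k - i) by rewrite -expnD subnKC // ltnW.
  have -> : k ^ k = k ^ i.+1 * k ^ (k - i.+1) by rewrite -expnD subnKC.
  apply: (@leq_trans ('C(k, i.+1) * 2 ^ i * (k ^ (k - i.+1) * 2 ^ (k - i)))).
    by rewrite eq_leq //; ring.
  apply: leq_trans (leq_mul (bin_mul_expn2_leq k i) (leqnn _)) _.
  by rewrite eq_leq //; ring.
apply: leq_trans (leq_add (leqnn _) (leq_sum _ (fun i _ => term_le i))) _.
rewrite -big_distrr /= sum_expn2_sub !expnS; nia.
Qed.

Lemma expn_leq_fact k : k ^ k <= 3 ^ k.-1 * k`!.
Proof.
elim: k => [|[|k] IH] //=.
rewrite factS expnS mulnCA leq_mul2l /=.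
apply: leq_trans (expSn_leq k.+1) _.
by rewrite [3 ^ _]expnS -mulnA leq_mul2l.
Qed.

End FactorialBounds.

Local Open Scope ring_scope.

Section RealBounds.
Variable R : realType.
Implicit Types (rho K eps : R) (k n : nat).

Lemma expr_Bernoulli_le1 rho n : 0 <= rho <= 1 ->
  rho ^+ n * (1 + n%:R * (1 - rho)) <= 1.
Proof.
move=> /andP[r0 r1]; elim: n => [|n IH]; first by rewrite expr0 mul0r addr0 mulr1.
have p1 : rho ^+ n.+1 <= 1 by rewrite exprn_ile1.
have -> : rho ^+ n.+1 * (1 + n.+1%:R * (1 - rho))
    = rho * (rho ^+ n * (1 + n%:R * (1 - rho))) + (1 - rho) * rho ^+ n.+1.
  by rewrite exprS -natr1; ring.
nra.
Qed.

Lemma eventually_mulr_expr_le rho K eps : 0 <= rho < 1 -> 0 <= K -> 0 < eps ->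
  exists N, forall n, (N <= n)%N -> K * rho ^+ n <= eps.
Proof.
move=> /andP[r0 r1] K0 e0; set b := K / (eps * (1 - rho)).
have b0 : 0 <= b by apply: divr_ge0 => //; apply: mulr_ge0; lra.
exists (Num.Def.archi_bound b) => n hn.
have bn : b < n%:R by apply: lt_le_trans (archi_boundP b0) _; rewrite ler_nat.
have Kn : K <= eps * (n%:R * (1 - rho)).
  by move: bn; rewrite ltr_pdivrMr ?mulr_gt0 ?subr_gt0 // mulrCA => /ltW.
have := @expr_Bernoulli_le1 rho n; rewrite r0 ltW // => /(_ isT).
have : 0 <= rho ^+ n by rewrite exprn_ge0.
nra.
Qed.

Lemma mulr_geometric_sum rho m0 m n : (m0 <= m <= n)%N ->
  (1 - rho) * \sum_(m <= k < n) rho ^+ (k - m0) = rho ^+ (m - m0) - rho ^+ (n - m0).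
Proof.
move=> /andP[hm hmn]; rewrite -[RHS]opprB.
have /= <- := telescope_sumr (fun k => rho ^+ (k - m0)) hmn.
rewrite mulr_sumr -sumrN.
apply: eq_big_nat => k /andP[hk _]; rewrite subSn ?(leq_trans hm hk) // exprS.
ring.
Qed.

Lemma le_inf_mulr (A : set R) (a K : R) : (A !=set0)%classic -> 0 <= K ->
  (forall C, A C -> a <= C * K) -> a <= inf A * K.
Proof.
move=> [C0 AC0]; rewrite le_eqVlt => /predU1P[<-|Kp] ha.
  by move: (ha C0 AC0); rewrite !mulr0.
rewrite -ler_pdivrMr //; apply: lb_le_inf; first by exists C0.
by move=> C AC; rewrite ler_pdivrMr // ha.
Qed.

Lemma natS_le_2expr32 k : (k.+1)%:R <= 2 * (3 / 2) ^+ k :> R.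
Proof.
elim: k => [|k IH]; first by rewrite expr0 mulr1 ler_nat.
have h : 1 <= (3 / 2 : R) ^+ k by apply: exprn_ege1; lra.
rewrite exprS -natr1; lra.
Qed.

Lemma expr3_pred_le (b : R) k : 0 <= b -> 3 ^+ k.-1 * b ^+ k <= (3 * b) ^+ k.
Proof.
move=> b0; case: k => [|k]; first by rewrite !expr0 mulr1.
rewrite exprMn [3 ^+ k.+1]exprS /= -mulrA ler_peMl //.
  by rewrite mulr_ge0 ?exprn_ge0 //; lra.
lra.
Qed.

Lemma expr3_mulS (b : R) k : 3 ^+ k * b ^+ k.+1 = b * (3 * b) ^+ k.
Proof. by rewrite exprMn exprS; ring. Qed.

Lemma normr_div_fact (c : R) k : `|c| = 1 -> `|c / k`!%:R| * k`!%:R = 1.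
Proof.
move=> hc; rewrite normrM hc mul1r normfV normr_nat mulVf //.
by rewrite pnatr_eq0 -lt0n fact_gt0.
Qed.

Lemma normr_sign k : `|(-1) ^+ k : R| = 1.
Proof. by rewrite normrX normrN1 expr1n. Qed.

End RealBounds.

(* The [k]-th Taylor coefficient of [exp (- X) * (1 + X)]. *)
Definition expN1D_coef (R : realType) (k : nat) : R :=
  (-1) ^+ k * (1 - k%:R) / k`!%:R.

Lemma expN1D_coefS (R : realType) n :
  (-1) ^+ n / n`!%:R + (-1) ^+ n.+1 / (n.+1)`!%:R = expN1D_coef R n.+1.
Proof.
have f0 : n`!%:R != 0 :> R by rewrite pnatr_eq0 -lt0n fact_gt0.
rewrite /expN1D_coef factS natrM exprS -natr1; field.
by rewrite f0 /= natr1 pnatr_eq0.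
Qed.

Lemma normr_expN1D_coef (R : realType) k :
  `|expN1D_coef R k.+1| * (k.+1)`!%:R = k%:R.
Proof.
rewrite /expN1D_coef.
have -> : 1 - (k.+1)%:R = - k%:R :> R by rewrite -natr1; ring.
rewrite !normrM normr_sign mul1r normrN normr_nat normfV normr_nat.
by rewrite divfK // pnatr_eq0 -lt0n fact_gt0.
Qed.

Section AdditiveIteration.
Variables (R : realType) (V : lmodType R) (u : V -> V).
Hypothesis uD : {morph u : x y / x + y}.

Lemma iter_morphD j : {morph iter j u : x y / x + y}.
Proof. by elim: j => // j IH x y /=; rewrite IH uD. Qed.

Lemma exp_partialN_idD x n :
  exp_partial u (-1) (x + u x) n.+1 =
  \sum_(k < n.+1) expN1D_coef R k *: iter k u x + ((-1) ^+ n / n`!%:R) *: iter n.+1 u x.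
Proof.
elim: n => [|n IH].
  by rewrite /exp_partial !big_ord1 /expN1D_coef /= expr0 subr0 mulr1 scalerDr.
rewrite /exp_partial big_ord_recr /= -/(exp_partial u (-1) (x + u x) n.+1) IH.
rewrite [in RHS]big_ord_recr /= iter_morphD uD -iterSr iterS scalerDr.
by rewrite -!addrA; congr (_ + _); rewrite addrA -scalerDl expN1D_coefS.
Qed.

End AdditiveIteration.

Section ScaledSpace.
Variables (R : realType) (V : lmodType R) (S : R).
Variables (E : R -> V -> Prop) (nrm : R -> V -> R).
Hypothesis HS : is_scaled_space S E nrm.
Implicit Types (s eps : R) (x y z : V) (f h : nat -> V).

Lemma scaled_mem0 s : 0 < s < S -> E s 0.
Proof. by case: HS => _ [_ H _ _ _] /H []. Qed.

Lemma scaled_memD s x y : 0 < s < S -> E s x -> E s y -> E s (x + y).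
Proof. by case: HS => _ [_ H _ _ _] /H [_ h _]; apply: h. Qed.

Lemma scaled_memZ s a x : 0 < s < S -> E s x -> E s (a *: x).
Proof. by case: HS => _ [_ H _ _ _] /H [_ _ h]; apply: h. Qed.

Lemma scaled_memB s x y : 0 < s < S -> E s x -> E s y -> E s (x - y).
Proof.
by move=> hs hx hy; rewrite -scaleN1r; apply: scaled_memD => //; apply: scaled_memZ.
Qed.

Lemma scaled_mem_sum s (I : Type) (r : seq I) (P : pred I) (F : I -> V) :
  0 < s < S -> (forall i, E s (F i)) -> E s (\sum_(i <- r | P i) F i).
Proof.
move=> hs hF; apply: (big_ind (E s)); first exact: scaled_mem0.
  by move=> ? ?; apply: scaled_memD.
by move=> i _; apply: hF.
Qed.

Lemma scaled_mem_le s s' x : 0 < s -> s < s' -> s' < S -> E s' x ->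
  E s x /\ nrm s x <= nrm s' x.
Proof. by case: HS => _ [_ _ _ _ H] h1 h2 h3; apply: H. Qed.

Lemma nrm_ge0 s x : 0 < s < S -> E s x -> 0 <= nrm s x.
Proof. by case: HS => _ [_ _ H _ _] /H [h _ _ _]; apply: h. Qed.

Lemma nrmZ s a x : 0 < s < S -> E s x -> nrm s (a *: x) = `|a| * nrm s x.
Proof. by case: HS => _ [_ _ H _ _] /H [_ _ h _]; apply: h. Qed.

Lemma ler_nrmD s x y : 0 < s < S -> E s x -> E s y ->
  nrm s (x + y) <= nrm s x + nrm s y.
Proof. by case: HS => _ [_ _ H _ _] /H [_ _ _ h]; apply: h. Qed.

Lemma nrm0 s : 0 < s < S -> nrm s 0 = 0.
Proof.
move=> hs; rewrite -(scale0r (0 : V)) nrmZ //; last exact: scaled_mem0.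
by rewrite normr0 mul0r.
Qed.

Lemma nrmBC s x y : 0 < s < S -> E s x -> E s y -> nrm s (x - y) = nrm s (y - x).
Proof.
move=> hs hx hy; rewrite -opprB -[- (y - x)]scaleN1r nrmZ //; last exact: scaled_memB.
by rewrite normrN normr1 mul1r.
Qed.

Lemma ler_nrm_sum s (I : Type) (r : seq I) (P : pred I) (F : I -> V) :
  0 < s < S -> (forall i, E s (F i)) ->
  nrm s (\sum_(i <- r | P i) F i) <= \sum_(i <- r | P i) nrm s (F i).
Proof.
move=> hs hF; pose K (b : R) (v : V) := E s v /\ nrm s v <= b.
suff [] : K (\sum_(i <- r | P i) nrm s (F i)) (\sum_(i <- r | P i) F i) by [].
apply: (big_rec2 K); first by split; [exact: scaled_mem0 | rewrite nrm0].
move=> i b v _ [hv hb]; split; first exact: scaled_memD.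
by apply: le_trans (ler_nrmD hs (hF i) hv) _; rewrite lerD2l.
Qed.

Lemma converges_in_nrm_sub_le s f y z m (B : R) : 0 < s < S ->
  converges_in E nrm s f y -> E s z ->
  (forall n, (m <= n)%N -> nrm s (f n - z) <= B) -> nrm s (y - z) <= B.
Proof.
move=> hs [Ey [Ef cvf]] Ez hB; apply/ler_addgt0Pr => e e0.
have [N HN] := cvf e e0; pose n := maxn N m.
have -> : y - z = (y - f n) + (f n - z) by rewrite addrA subrK.
apply: le_trans (ler_nrmD hs (scaled_memB hs Ey (Ef n)) (scaled_memB hs (Ef n) Ez)) _.
rewrite addrC lerD ?hB ?leq_maxr // nrmBC ?HN ?leq_maxl //.
Qed.

Lemma converges_in_near s f h y : 0 < s < S ->
  converges_in E nrm s f y -> (forall n, E s (h n)) ->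
  (forall eps, 0 < eps -> exists N, forall n, (N <= n)%N -> nrm s (h n - f n) <= eps) ->
  converges_in E nrm s h y.
Proof.
move=> hs [Ey [Ef cvf]] Eh hfh; split=> //; split=> // e e0.
have e2 : 0 < e / 2 by lra.
have [N1 HN1] := cvf _ e2; have [N2 HN2] := hfh _ e2.
exists (maxn N1 N2) => n hn; have -> : h n - y = (h n - f n) + (f n - y).
  by rewrite addrA subrK.
apply: le_trans (ler_nrmD hs (scaled_memB hs (Eh n) (Ef n)) (scaled_memB hs (Ef n) Ey)) _.
have := HN1 n (leq_trans (leq_maxl _ _) hn); have := HN2 n (leq_trans (leq_maxr _ _) hn).
lra.
Qed.

Section GeometricSeries.
Variables (s C rho : R) (t : nat -> V) (m0 : nat).
Hypotheses (hs : 0 < s < S) (Et : forall k, E s (t k)).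
Hypotheses (C0 : 0 <= C) (rho0 : 0 <= rho) (rho1 : rho < 1).
Hypothesis t_le : forall k, (m0 <= k)%N -> nrm s (t k) <= C * rho ^+ (k - m0).

Let Ef n : E s (\sum_(k < n) t k).
Proof. exact: scaled_mem_sum. Qed.

Lemma nrm_partial_sum_sub_le m n : (m0 <= m <= n)%N ->
  nrm s (\sum_(k < n) t k - \sum_(k < m) t k) <= C * rho ^+ (m - m0) / (1 - rho).
Proof.
move=> /andP[hm hmn]; have r1 : 0 < 1 - rho by rewrite subr_gt0.
rewrite -!(big_mkord xpredT) (big_cat_nat (leq0n m) hmn) /= addrAC subrr add0r.
apply: le_trans (ler_nrm_sum _ _ hs Et) _.
apply: le_trans (_ : \sum_(m <= k < n) C * rho ^+ (k - m0) <= _).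
  by apply: ler_sum_nat => k /andP[hk _]; rewrite t_le // (leq_trans hm hk).
rewrite -mulr_sumr -mulrA ler_wpM2l // ler_pdivlMr // mulrC.
by rewrite mulr_geometric_sum ?hm ?hmn // gerDl oppr_le0 exprn_ge0.
Qed.

Lemma geometric_series_converges_in : exists y,
  converges_in E nrm s (fun n => \sum_(k < n) t k) y /\
  nrm s (y - \sum_(k < m0) t k) <= C / (1 - rho).
Proof.
have r1 : 0 < 1 - rho by rewrite subr_gt0.
have K0 : 0 <= C / (1 - rho) by rewrite divr_ge0 // ltW.
have rho01 : 0 <= rho < 1 by rewrite rho0.
have cauchy_from m n : (m0 <= m <= n)%N ->
    nrm s (\sum_(k < n) t k - \sum_(k < m) t k) <= C / (1 - rho) * rho ^+ (m - m0).
  by move=> h; rewrite mulrAC nrm_partial_sum_sub_le.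
have [y [Ey cvy]] : exists y, E s y /\ forall eps, 0 < eps ->
    exists N, forall n, (N <= n)%N -> nrm s (\sum_(k < n) t k - y) <= eps.
  case: HS => _ [_ _ _ complete _]; apply: complete => // e e0.
  have [N HN] := eventually_mulr_expr_le rho01 K0 e0.
  exists (N + m0)%N => m n hm hn.
  wlog hmn : m n hm hn / (m <= n)%N => [hw|].
    case: (leqP m n) => hmn; first exact: hw.
    by rewrite nrmBC //; apply: hw => //; exact: ltnW.
  rewrite nrmBC //; apply: le_trans (cauchy_from m n _) _; first by rewrite hmn andbT; lia.
  by apply: HN; lia.
have cv : converges_in E nrm s (fun n => \sum_(k < n) t k) y by [].
exists y; split=> //; apply: (converges_in_nrm_sub_le (m := m0) hs cv (Ef m0)) => n hn.
by have := cauchy_from m0 n; rewrite leqnn hn subnn expr0 mulr1 => ->.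
Qed.

End GeometricSeries.

End ScaledSpace.

Section OneBoundedMorphism.
Variables (R : realType) (V : lmodType R) (S : R).
Variables (E : R -> V -> Prop) (nrm : R -> V -> R) (tau : R) (u : V -> V).
Hypotheses (HS : is_scaled_space S E nrm) (tau0 : 0 < tau) (tauS : tau < S).
Hypotheses (Hu : is_tau_morphism E nrm tau u) (Hb : one_bounded E nrm tau u).

Implicit Types (s sig c M : R) (x : V).

Let N := N1 E nrm tau u.

Lemma N1_ge0 : 0 <= N.
Proof. by apply: lb_le_inf Hb _ => C []. Qed.

Lemma tau_morphismD : {morph u : x y / x + y}.
Proof. by case: Hu => lin _ x y; have := lin 1 x y; rewrite !scale1r. Qed.

Lemma morph_mem (s' : R) s x : 0 < s -> s < s' -> s' <= tau -> E s' x -> E s (u x).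
Proof.
move=> s0 ss' s't; have s'0 : 0 < s' := lt_trans s0 ss'.
by case: Hu => _ /(_ s' s s'0 s't s0 ss') [] h _; apply: h.
Qed.

Lemma nrm_morph_le s sig x : 0 < s -> 0 < sig -> s + sig <= tau ->
  E (s + sig) x -> nrm s (u x) <= N / sig * nrm (s + sig) x.
Proof.
move=> s0 sig0 hle hx.
have hS : 0 < s + sig < S by rewrite addr_gt0 ?(le_lt_trans hle tauS).
rewrite -mulrA; apply: le_inf_mulr Hb _ _.
  by rewrite mulr_ge0 ?(nrm_ge0 HS hS) // invr_ge0 ltW.
move=> C [_ hC]; rewrite mulrA; apply: hC => //; lra.
Qed.

Lemma nrm_iter_le j s sig x : 0 < s -> 0 < sig -> s + j%:R * sig <= tau ->
  E (s + j%:R * sig) x ->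
  E s (iter j u x) /\ nrm s (iter j u x) <= (N / sig) ^+ j * nrm (s + j%:R * sig) x.
Proof.
elim: j s x => [|j IH] s x s0 sig0.
  by rewrite mul0r addr0 expr0 mul1r => _ hx; split; [exact: hx | exact: lexx].
have -> : s + j.+1%:R * sig = s + sig + j%:R * sig by rewrite -natr1; ring.
move=> hle hx; have jsig : 0 <= j%:R * sig := mulr_ge0 (ler0n _ _) (ltW sig0).
have [Ej Hj] := IH (s + sig) x (addr_gt0 s0 sig0) sig0 hle hx.
rewrite iterS; split; first by apply: morph_mem Ej => //; lra.
apply: le_trans (nrm_morph_le s0 sig0 _ Ej) _; first lra.
rewrite exprS -[X in _ <= X]mulrA; apply: ler_wpM2l Hj.
by rewrite divr_ge0 ?N1_ge0 // ltW.
Qed.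

Lemma nrm_iter_le_pow k s x : 0 < s -> s < tau -> E tau x ->
  E s (iter k u x) /\ nrm s (iter k u x) <= (k%:R * (N / (tau - s))) ^+ k * nrm tau x.
Proof.
move=> s0 st hx; case: k => [|k].
  by have := scaled_mem_le HS s0 st tauS hx; rewrite expr0 mul1r.
have k0 : 0 < k.+1%:R :> R by rewrite ltr0n.
have ts : 0 < tau - s by rewrite subr_gt0.
have sig0 : 0 < (tau - s) / k.+1%:R by rewrite divr_gt0.
have htau : s + k.+1%:R * ((tau - s) / k.+1%:R) = tau by rewrite mulrC divfK ?subrKC ?gt_eqF.
have := nrm_iter_le (j := k.+1) (x := x) s0 sig0; rewrite htau.
move=> /(_ (lexx _) hx) [Ek hk]; split=> //.
by apply: le_trans hk _; rewrite invf_div mulrCA mulrA.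
Qed.

Lemma nrm_iter_le_fact k s x : 0 < s -> s < tau -> E tau x ->
  E s (iter k u x) /\
  nrm s (iter k u x) <= k`!%:R * (3 ^+ k.-1 * (N / (tau - s)) ^+ k * nrm tau x).
Proof.
move=> s0 st hx; have [Ek hk] := nrm_iter_le_pow k s0 st hx; split=> //.
have a0 : 0 <= N / (tau - s) by rewrite divr_ge0 ?N1_ge0 // subr_ge0 ltW.
have hT : 0 < tau < S by rewrite tau0 tauS.
have hkk : k%:R ^+ k <= k`!%:R * 3 ^+ k.-1 :> R.
  by rewrite -natrX -[3 ^+ _]natrX -natrM ler_nat mulnC expn_leq_fact.
have An0 : 0 <= (N / (tau - s)) ^+ k * nrm tau x.
  by rewrite mulr_ge0 ?exprn_ge0 ?(nrm_ge0 HS hT hx).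
apply: le_trans hk _; rewrite exprMn; nra.
Qed.

Lemma nrm_scale_iter_le k s x c M : 0 < s -> s < tau -> E tau x ->
  `|c| * k`!%:R <= M ->
  E s (c *: iter k u x) /\
  nrm s (c *: iter k u x) <= M * (3 ^+ k.-1 * (N / (tau - s)) ^+ k * nrm tau x).
Proof.
move=> s0 st hx hc; have hs : 0 < s < S by rewrite s0 (lt_trans st tauS).
have hT : 0 < tau < S by rewrite tau0 tauS.
have a0 : 0 <= N / (tau - s) by rewrite divr_ge0 ?N1_ge0 // subr_ge0 ltW.
have [Ek hk] := nrm_iter_le_fact k s0 st hx.
split; first exact (scaled_memZ HS c hs Ek).
rewrite (nrmZ HS c hs Ek); apply: le_trans (ler_wpM2l (normr_ge0 c) hk) _.
rewrite [X in X <= _]mulrA; apply: ler_wpM2r hc.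
by rewrite !mulr_ge0 ?exprn_ge0 ?(nrm_ge0 HS hT hx).
Qed.

End OneBoundedMorphism.

Section ExponentialEstimates.
Variables (R : realType) (V : lmodType R) (S : R).
Variables (E : R -> V -> Prop) (nrm : R -> V -> R) (tau : R) (u : V -> V).
Hypotheses (HS : is_scaled_space S E nrm) (tau0 : 0 < tau) (tauS : tau < S).
Hypotheses (Hu : is_tau_morphism E nrm tau u) (Hb : one_bounded E nrm tau u).
Variables (s : R) (x : V).
Hypotheses (s0 : 0 < s) (st : s < tau) (hx : E tau x).
Hypothesis small : 3 * N1 E nrm tau u / (tau - s) <= 2^-1.

Local Notation N := (N1 E nrm tau u).
Local Notation a := (N / (tau - s)).

Let hs : 0 < s < S. Proof. by rewrite s0 (lt_trans st tauS). Qed.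
Let hT : 0 < tau < S. Proof. by rewrite tau0 tauS. Qed.
Let a0 : 0 <= a. Proof. by rewrite divr_ge0 ?(N1_ge0 Hb) // subr_ge0 ltW. Qed.
Let r_le : 3 * a <= 2^-1. Proof. by rewrite mulrA. Qed.
Let nx0 : 0 <= nrm tau x. Proof. exact (nrm_ge0 HS hT hx). Qed.

Let scale_iter_le k v c M : E tau v -> `|c| * k`!%:R <= M ->
  E s (c *: iter k u v) /\ nrm s (c *: iter k u v) <= M * (3 ^+ k.-1 * a ^+ k * nrm tau v).
Proof. exact (nrm_scale_iter_le HS tau0 tauS Hu Hb s0 st). Qed.

Lemma exp_converges_le :
  exists y, converges_in E nrm s (exp_partial u 1 x) y /\ nrm s y <= 2 * nrm tau x.
Proof.
have hr := r_le; have ha := a0; have hn := nx0.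
have c_le k : `|1 ^+ k / k`!%:R : R| * k`!%:R <= 1 by rewrite normr_div_fact ?expr1n ?normr1.
have [||||y [cy hy]] := @geometric_series_converges_in _ _ _ _ _ HS s (nrm tau x) (3 * a)
   (fun k => (1 ^+ k / k`!%:R) *: iter k u x) 0 hs _ nx0 _ _ _; try lra.
- by move=> k; have [] := scale_iter_le hx (c_le k).
- move=> k _; have [_ hk] := scale_iter_le hx (c_le k); apply: le_trans hk _.
  have := expr3_pred_le k ha; rewrite subn0; nra.
exists y; split=> //; move: hy; rewrite big_ord0 subr0 => hy.
by apply: le_trans hy _; rewrite ler_pdivrMr; nra.
Qed.

Let sign_le k : `|(-1) ^+ k / k`!%:R : R| * k`!%:R <= 1.
Proof. by rewrite normr_div_fact ?normr_sign. Qed.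

Lemma expN_sub_id_converges_le :
  exists y, converges_in E nrm s (exp_partial u (-1) x) y /\
    nrm s (y - x) <= 6 * nrm tau x / (tau - s) * N.
Proof.
have hr := r_le; have ha := a0; have hn := nx0; have han : 0 <= a * nrm tau x by nra.
have [||||y [cy hy]] := @geometric_series_converges_in _ _ _ _ _ HS s (a * nrm tau x) (3 * a)
   (fun k => ((-1) ^+ k / k`!%:R) *: iter k u x) 1 hs _ han _ _ _; try lra.
- by move=> k; have [] := scale_iter_le hx (sign_le k).
- move=> [|k] // _; have [_ hk] := scale_iter_le hx (sign_le k.+1); apply: le_trans hk _.
  rewrite subn1 /= expr3_mulS; lra.
exists y; split=> //; move: hy; rewrite /= big_ord1 expr0 fact0 divr1 scale1r => hy.
apply: le_trans hy _; rewrite ler_pdivrMr; first nra.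
lra.
Qed.

Lemma expN_sub_id_converges_le_image : E tau (u x) ->
  exists y, converges_in E nrm s (exp_partial u (-1) x) y /\ nrm s (y - x) <= 2 * nrm tau (u x).
Proof.
move=> hux; have hr := r_le; have ha := a0; have hn := nrm_ge0 HS hT hux.
have c_le k : `|(-1) ^+ k.+1 / k.+1`!%:R : R| * k`!%:R <= 1.
  rewrite normrM normr_sign mul1r normfV normr_nat factS natrM invfM.
  rewrite -mulrA mulVf ?mulr1; last by rewrite pnatr_eq0 -lt0n fact_gt0.
  by rewrite invr_le1 ?unitfE ?pnatr_eq0 // ?ler1n // ltr0n.
have [||||y [cy hy]] := @geometric_series_converges_in _ _ _ _ _ HS s (nrm tau (u x)) (3 * a)
   (fun k => ((-1) ^+ k / k`!%:R) *: iter k u x) 1 hs _ hn _ _ _; try lra.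
- by move=> k; have [] := scale_iter_le hx (sign_le k).
- move=> [|k] // _; have [_ hk] := scale_iter_le hux (c_le k).
  rewrite iterSr; apply: le_trans hk _; rewrite subn1 /=.
  have := expr3_pred_le k ha; nra.
exists y; split=> //; move: hy; rewrite /= big_ord1 expr0 fact0 divr1 scale1r => hy.
apply: le_trans hy _; rewrite ler_pdivrMr; first nra.
lra.
Qed.

Let iter_mem k : E s (iter k u x).
Proof. by have [] := nrm_iter_le_fact HS tau0 tauS Hu Hb k s0 st hx. Qed.

Lemma exp_partialN_idD_near eps : 0 < eps -> exists n0, forall n, (n0 <= n)%N ->
  nrm s (exp_partial u (-1) (x + u x) n - \sum_(k < n) expN1D_coef R k *: iter k u x) <= eps.
Proof.
move=> e0; have hr := r_le; have ha := a0; have hn := nx0.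
have K0 : 0 <= 2 * a * nrm tau x by nra.
have rho01 : 0 <= 3 / 2 * (3 * a) < 1 by apply/andP; split; lra.
have [n0 Hn0] := eventually_mulr_expr_le rho01 K0 e0.
exists n0.+1 => -[//|n] hn0n; rewrite (exp_partialN_idD (tau_morphismD Hu)) addrAC subrr add0r.
have c_le : `|(-1) ^+ n / n`!%:R : R| * (n.+1)`!%:R <= n.+1%:R.
  by rewrite factS natrM mulrCA normr_div_fact ?normr_sign // mulr1.
have [_ hk] := scale_iter_le hx c_le; apply: le_trans hk (le_trans _ (Hn0 n hn0n)).
rewrite /= expr3_mulS [(3 / 2 * _) ^+ _]exprMn.
have p0 : 0 <= (3 * a) ^+ n by apply: exprn_ge0; lra.
have := natS_le_2expr32 R n; have := mulr_ge0 (mulr_ge0 ha p0) hn.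
nra.
Qed.

Lemma expN_idD_converges (y : V) :
  converges_in E nrm s (fun n => \sum_(k < n) expN1D_coef R k *: iter k u x) y ->
  converges_in E nrm s (exp_partial u (-1) (x + u x)) y.
Proof.
move=> cy; apply: (converges_in_near HS hs cy) => [n|]; last exact: exp_partialN_idD_near.
rewrite /exp_partial; apply: (scaled_mem_sum HS) => // k.
apply: (scaled_memZ HS) => //.
rewrite (iter_morphD (tau_morphismD Hu)) -iterSr.
exact (scaled_memD HS hs (iter_mem _) (iter_mem _)).
Qed.

Let coef01 : \sum_(k < 2) expN1D_coef R k *: iter k u x = x.
Proof.
rewrite big_ord_recr big_ord1 /= /expN1D_coef expr0 subr0 !mulr1 fact0 divr1 scale1r.
by rewrite subrr mulr0 mul0r scale0r addr0.
Qed.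

Lemma expN_idD_sub_id_converges_le :
  exists y, converges_in E nrm s (exp_partial u (-1) (x + u x)) y /\
    nrm s (y - x) <= 36 * nrm tau x / (tau - s) ^+ 2 * N ^+ 2.
Proof.
have hr := r_le; have ha := a0; have hn := nx0.
have ra0 : 0 <= 2 * (3 * a) * a by nra.
have C0 := mulr_ge0 ra0 hn.
have [||||y [cy hy]] := @geometric_series_converges_in _ _ _ _ _ HS s _ (3 / 2 * (3 * a))
   (fun k => expN1D_coef R k *: iter k u x) 2 hs _ C0 _ _ _; try lra.
- by move=> k; exact (scaled_memZ HS _ hs (iter_mem k)).
- move=> [|[|k]] // _.
  have c_le : `|expN1D_coef R k.+2| * (k.+2)`!%:R <= k.+1%:R by rewrite normr_expN1D_coef.
  have [_ hk] := scale_iter_le hx c_le.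
  apply: le_trans hk _; rewrite subn2 /= expr3_mulS [(3 / 2 * _) ^+ _]exprMn exprS.
  have p0 : 0 <= (3 * a) ^+ k by apply: exprn_ge0; lra.
  have ar0 : 0 <= a * (3 * a) by nra.
  have := natS_le_2expr32 R k; have := mulr_ge0 (mulr_ge0 ar0 p0) hn.
  nra.
exists y; split; first exact: expN_idD_converges.
rewrite coef01 in hy; apply: le_trans hy _.
have -> : 36 * nrm tau x / (tau - s) ^+ 2 * N ^+ 2 = 36 * (a ^+ 2 * nrm tau x).
  by rewrite expr_div_n; ring.
rewrite ler_pdivrMr; first nra.
lra.
Qed.

Lemma expN_idD_sub_id_converges_le_image : E tau (u x) ->
  exists y, converges_in E nrm s (exp_partial u (-1) (x + u x)) y /\
    nrm s (y - x) <= 2 * nrm tau (u x) / (tau - s) * N.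
Proof.
move=> hux; have hr := r_le; have ha := a0; have hn := nrm_ge0 HS hT hux.
have C0 : 0 <= a * nrm tau (u x) by nra.
have c_le k : `|expN1D_coef R k.+2| * (k.+1)`!%:R <= 1.
  have := normr_expN1D_coef R k.+1; rewrite factS natrM mulrCA => ck.
  by rewrite -(ler_pM2l (ltr0Sn R k.+1)) ck mulr1 ler_nat.
have [||||y [cy hy]] := @geometric_series_converges_in _ _ _ _ _ HS s _ (3 * a)
   (fun k => expN1D_coef R k *: iter k u x) 2 hs _ C0 _ _ _; try lra.
- by move=> k; exact (scaled_memZ HS _ hs (iter_mem k)).
- move=> [|[|k]] // _; have [_ hk] := scale_iter_le hux (c_le k).
  rewrite iterSr; apply: le_trans hk _; rewrite subn2 /= expr3_mulS; lra.
exists y; split; first exact: expN_idD_converges.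
rewrite coef01 in hy; apply: le_trans hy _.
rewrite ler_pdivrMr; first nra.
lra.
Qed.

End ExponentialEstimates.

Theorem mainTheorem9 (R : realType) (V : lmodType R) (S : R)
    (E : R -> V -> Prop) (nrm : R -> V -> R) (tau : R) (u : V -> V) :
  is_scaled_space S E nrm ->
  0 < tau -> tau < S ->
  is_tau_morphism E nrm tau u ->
  one_bounded E nrm tau u ->
  forall s : R, 0 < s -> s < tau ->
  3 * N1 E nrm tau u / (tau - s) <= 2^-1 ->
  forall x : V, E tau x ->
  (* 1) *)
  (exists y, converges_in E nrm s (exp_partial u (-1) (x + u x)) y /\
     nrm s (y - x) <= 36 * nrm tau x / (tau - s) ^+ 2 * N1 E nrm tau u ^+ 2) /\
  (* 2) (trivial when u x is not in E_tau, where |u x|_tau = +oo) *)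
  (E tau (u x) ->
   exists y, converges_in E nrm s (exp_partial u (-1) (x + u x)) y /\
     nrm s (y - x) <= 2 * nrm tau (u x) / (tau - s) * N1 E nrm tau u) /\
  (* 3) *)
  (exists y, converges_in E nrm s (exp_partial u (-1) x) y /\
     nrm s (y - x) <= 6 * nrm tau x / (tau - s) * N1 E nrm tau u) /\
  (* 4) *)
  (E tau (u x) ->
   exists y, converges_in E nrm s (exp_partial u (-1) x) y /\
     nrm s (y - x) <= 2 * nrm tau (u x)) /\
  (* 5) *)
  (exists y, converges_in E nrm s (exp_partial u 1 x) y /\
     nrm s y <= 2 * nrm tau x).
Proof.
move=> HS tau0 tauS Hu Hb s s0 st small x hx.
split; first exact (expN_idD_sub_id_converges_le HS tau0 tauS Hu Hb s0 st hx small).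
split; first exact (expN_idD_sub_id_converges_le_image HS tau0 tauS Hu Hb s0 st hx small).
split; first exact (expN_sub_id_converges_le HS tau0 tauS Hu Hb s0 st hx small).
split; first exact (expN_sub_id_converges_le_image HS tau0 tauS Hu Hb s0 st hx small).
exact (exp_converges_le HS tau0 tauS Hu Hb s0 st hx small).
Qed.
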